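(* Let $A\in\mathbb{R}^{m\times n}$ with $A'A$ invertible, $y\in\mathbb{R}^m$, $\gamma>0$, $\mu\ge0$. Then the optimal value $\zeta_{CR}$ of (CR) satisfies $$\zeta_{CR}=\max_{p\in\mathbb{R}^n}\ \|y\|_2^2-\Big(A'y-\tfrac{1}{2\gamma}p\Big)'(A'A)^{-1}\Big(A'y-\tfrac{1}{2\gamma}p\Big)+\sum_{i=1}^n\min\Big\{0,\ \mu-\tfrac{p_i^2}{4\gamma}\Big\}.$$
   Context: (CR) is the problem $\zeta_{CR}=\min_{x,z}\ \|y-Ax\|_2^2+\frac1\gamma\sum_{i=1}^n \frac{x_i^2}{z_i}+\mu\sum_{i=1}^n z_i$ subject to $x\in\mathbb{R}^n$, $z\in[0,1]^n$, where $x_i^2/z_i=0$ if $x_i=z_i=0$ and $x_i^2/z_i=+\infty$ if $z_i=0$, $x_i\ne0$. *)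

From HB Require Import structures.
From mathcomp Require Import all_boot all_order all_algebra.
From mathcomp Require Import all_classical all_reals ereal.
Set Implicit Arguments. Unset Strict Implicit. Unset Printing Implicit Defensive.
Import Order.TTheory GRing.Theory Num.Theory.
Local Open Scope ring_scope.

Definition sqnorm (R : realType) (k : nat) (v : 'cV[R]_k) : R :=
  \sum_(i < k) v i 0 ^+ 2.

(* perspective term x^2/z with the conventions of (CR):
   0 if x = z = 0, +oo if z = 0 and x <> 0. *)
Definition persp (R : realType) (x z : R) : \bar R :=
  if z == 0 then (if x == 0 then 0%E else +oo%E) else (x ^+ 2 / z)%:E.

Definition CR_obj (R : realType) (m n : nat) (A : 'M[R]_(m, n)) (y : 'cV[R]_m)
    (gamma mu : R) (x z : 'cV[R]_n) : \bar R :=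
  ((sqnorm (y - A *m x))%:E
   + (gamma^-1)%:E * (\sum_(i < n) persp (x i ord0) (z i ord0))
   + (mu * \sum_(i < n) z i 0)%:E)%E.

Definition CR_feasible (R : realType) (n : nat) (z : 'cV[R]_n) : Prop :=
  forall i : 'I_n, 0 <= z i 0 <= 1.

Definition zeta_CR (R : realType) (m n : nat) (A : 'M[R]_(m, n)) (y : 'cV[R]_m)
    (gamma mu : R) : \bar R :=
  ereal_inf [set e | exists x z : 'cV[R]_n, CR_feasible z /\ e = CR_obj A y gamma mu x z].

Definition CR_dual (R : realType) (m n : nat) (A : 'M[R]_(m, n)) (y : 'cV[R]_m)
    (gamma mu : R) (p : 'cV[R]_n) : R :=
  let v := A^T *m y - (2 * gamma)^-1 *: p in
  sqnorm y - (v^T *m invmx (A^T *m A) *m v) 0 0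
  + \sum_(i < n) Num.min 0 (mu - p i 0 ^+ 2 / (4 * gamma)).

From HB Require Import structures.
From mathcomp Require Import all_boot all_order all_algebra.
From mathcomp Require Import all_classical all_reals all_analysis.
From mathcomp Require Import ring lra.
Import Order.TTheory GRing.Theory Num.Theory.
Import numFieldNormedType.Exports.
Local Open Scope classical_set_scope.
Local Open Scope ring_scope.

(* Write N = (A'A)^-1, k = 1/(4 gamma), phi(s) = min(0, mu - k s^2) and
   w(p) = A'y - p/(2 gamma); the dual objective is
   D(p) = |y|^2 - w(p)' N w(p) + sum_i phi(p_i).

   - Completing the square in x shows that, for any p and any (x, z) with
     finite objective, obj(x, z) = |A (x - N w(p))|^2 + D(p) + sum_i g_i,
     where g_i = x_i^2/(gamma z_i) + mu z_i - (p_i x_i/gamma + phi(p_i)) is a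
     one-dimensional Fenchel-Young gap.  Since every g_i >= 0, D(p) is a
     lower bound for obj (weak duality).
   - D is continuous and coercive, D(p) <= |y|^2 + mu - k p_i^2, so it
     attains its maximum on a compact box.
   - At a maximizer p, moving only p_i gives a one-dimensional first-order
     condition on phi ([slope_cond]).  Its analysis near the kink of phi
     shows that with x = N w(p) every gap g_i vanishes for a suitable
     z_i in [0, 1], so obj(x, z) = D(p) and zeta_CR = max D. *)

Section Scalar.
Context {R : realFieldType}.
Implicit Types (gamma k mu b s t u a x z e d : R).

(* The concave function whose sum appears in the dual; with k = 1/(4 gamma)
   the dual term min(0, mu - p_i^2/(4 gamma)) is literally phi k mu p_i. *)
Definition phi k mu s : R := Num.min 0 (mu - s ^+ 2 * k).

(* The real value of the perspective x^2/z, wherever it is finite. *)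
Definition persp_val x z : R := if z == 0 then 0 else x ^+ 2 / z.

(* If t a <= t^2 b for all small t > 0 then a <= 0; every first-order
   condition below is extracted this way. *)
Lemma le0_of_small_quadratic a b e : 0 < e ->
  (forall t, 0 < t -> t < e -> t * a <= t ^+ 2 * b) -> a <= 0.
Proof.
move=> e_gt0 H; rewrite leNgt; apply/negP => a_gt0.
pose c := `|b| + 1.
have c_gt0 : 0 < c by rewrite ltr_pwDr // normr_ge0.
pose t := Num.min (e / 2) (a / c).
have t_gt0 : 0 < t by rewrite lt_min !divr_gt0.
have t_lt_e : t < e by rewrite gt_min ltr_pdivrMr // ltr_pMr // ltr1n.
have tc_le_a : t * c <= a by rewrite -ler_pdivlMr // ge_min lexx orbT.
have := H t t_gt0 t_lt_e; rewrite expr2 -mulrA ler_pM2l // => a_le_tb.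
have : t * b <= t * `|b| by rewrite ler_pM2l // ler_norm.
move: tc_le_a; rewrite /c mulrDr mulr1; lra.
Qed.

Lemma small_square_shift u d : 0 < d ->
  exists2 e : R, 0 < e & forall t : R, `|t| < e -> `|(u + t) ^+ 2 - u ^+ 2| < d.
Proof.
move=> d_gt0; pose c := 2 * `|u| + 1.
have c_gt0 : 0 < c by rewrite ltr_pwDr // mulr_ge0.
exists (Num.min 1 (d / c)) => [|t]; first by rewrite lt_min ltr01 divr_gt0.
rewrite lt_min ltr_pdivlMr // => /andP[t_lt1 tc_lt_d].
have -> : (u + t) ^+ 2 - u ^+ 2 = t * (2 * u + t) by rewrite sqrrD; ring.
rewrite normrM; apply: le_lt_trans tc_lt_d; rewrite ler_wpM2l //.
rewrite (le_trans (ler_normD _ _)) // normrM ger0_norm // /c lerD2l; exact: ltW.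
Qed.

Lemma phi_even k mu s : phi k mu (- s) = phi k mu s.
Proof. by rewrite /phi sqrrN. Qed.

Lemma phi_sub_le k mu s u : 0 <= k ->
  phi k mu s - phi k mu u <= k * Num.max 0 (u ^+ 2 - s ^+ 2).
Proof.
move=> k_ge0; rewrite /phi maxr_pMr // mulr0.
set S := mu - s ^+ 2 * k; set U := mu - u ^+ 2 * k.
have -> : k * (u ^+ 2 - s ^+ 2) = S - U by rewrite /S /U; ring.
have m0 : Num.min 0 S <= 0 by rewrite ge_min lexx.
have mS : Num.min 0 S <= S by rewrite ge_min lexx orbT.
have M0 : 0 <= Num.max 0 (S - U) by rewrite le_max lexx.
have MS : S - U <= Num.max 0 (S - U) by rewrite le_max lexx orbT.
by case: (leP 0 U) => U0; lra.
Qed.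

(* The function t |-> t a + phi(s + t) - t^2 b is maximal at t = 0.  This is
   what maximality of the dual gives when one coordinate is perturbed. *)
Definition slope_cond k mu b s a : Prop :=
  forall t, t * a - t ^+ 2 * b + phi k mu (s + t) - phi k mu s <= 0.

(* phi is even, so the slope condition is invariant under (s, a) -> (-s, -a). *)
Lemma slope_cond_opp k mu b s a :
  slope_cond k mu b s a -> slope_cond k mu b (- s) (- a).
Proof.
move=> H t; have := H (- t).
by rewrite -(phi_even _ _ (- s + t)) opprD opprK -(phi_even _ _ (- s)) opprK sqrrN; lra.
Qed.

(* For s >= 0 the slope is squeezed between 0 and 2ks, the one-sided
   derivatives of -phi at s in the two regimes of phi. *)
Lemma slope_cond_bounds {k mu b s a : R} : 0 <= k -> 0 <= s ->
  slope_cond k mu b s a -> 0 <= a <= 2 * k * s.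
Proof.
move=> k_ge0 s_ge0 H; apply/andP; split.
  rewrite -oppr_le0; apply: (@le0_of_small_quadratic _ (b + k) 1 ltr01).
  move=> t t_gt0 _; have := H (- t); have := @phi_sub_le k mu s (s + - t) k_ge0.
  have : k * Num.max 0 ((s + - t) ^+ 2 - s ^+ 2) <= k * t ^+ 2.
    rewrite ler_wpM2l // ge_max sqr_ge0 sqrrD /=.
    have : 0 <= s * t by rewrite mulr_ge0 // ltW.
    lra.
  rewrite sqrrN; lra.
rewrite -subr_le0; apply: (@le0_of_small_quadratic _ (b + k) 1 ltr01).
move=> t t_gt0 _; have := H t; have := @phi_sub_le k mu s (s + t) k_ge0.
have st : 0 <= s * t by rewrite mulr_ge0 // ltW.
have t2 : 0 <= t ^+ 2 := sqr_ge0 t.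
rewrite max_r; last by rewrite sqrrD; lra.
rewrite sqrrD; lra.
Qed.

Lemma slope_cond_interior {k mu b s a : R} : 0 < k -> s ^+ 2 * k < mu ->
  slope_cond k mu b s a -> a <= 0.
Proof.
move=> k_gt0 s_int H.
have d_gt0 : 0 < (mu - s ^+ 2 * k) / k by rewrite divr_gt0 // subr_gt0.
have [e e_gt0 He] := @small_square_shift s _ d_gt0.
apply: (@le0_of_small_quadratic _ b e e_gt0) => t t_gt0 t_lt_e.
have /ltr_normlP[_] : `|(s + t) ^+ 2 - s ^+ 2| < (mu - s ^+ 2 * k) / k.
  by apply: He; rewrite gtr0_norm.
rewrite -(ltr_pM2r k_gt0) divfK ?gt_eqF // => st_int.
have := H t; rewrite /phi !min_l; lra.
Qed.

Lemma slope_cond_exterior {k mu b s a : R} : 0 < k -> mu < s ^+ 2 * k ->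
  slope_cond k mu b s a -> 2 * k * s <= a.
Proof.
move=> k_gt0 s_ext H; rewrite -subr_le0.
have d_gt0 : 0 < (s ^+ 2 * k - mu) / k by rewrite divr_gt0 // subr_gt0.
have [e e_gt0 He] := @small_square_shift s _ d_gt0.
apply: (@le0_of_small_quadratic _ (b + k) e e_gt0) => t t_gt0 t_lt_e.
have /ltr_normlP[+ _] : `|(s + - t) ^+ 2 - s ^+ 2| < (s ^+ 2 * k - mu) / k.
  by apply: He; rewrite normrN gtr0_norm.
rewrite -(ltr_pM2r k_gt0) divfK ?gt_eqF // => st_ext.
have := H (- t); rewrite /phi !min_r; rewrite ?sqrrD ?sqrrN; lra.
Qed.

Lemma fenchel_young gamma mu s x z : 0 < gamma -> 0 <= z <= 1 -> (z = 0 -> x = 0) ->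
  s * x / gamma + phi (4 * gamma)^-1 mu s <= persp_val x z / gamma + mu * z.
Proof.
move=> gamma_gt0 /andP[z_ge0 z_le1] zx; set k := (4 * gamma)^-1.
have k_gt0 : 0 < k by rewrite invr_gt0 mulr_gt0.
have gk : gamma^-1 = 4 * k by rewrite /k invfM mulrA divff ?mul1r ?pnatr_eq0.
have [z0|z_neq0] := eqVneq z 0.
  by rewrite /persp_val z0 eqxx (zx z0) !(mulr0, mul0r, add0r, addr0) ge_min lexx.
have z_gt0 : 0 < z by rewrite lt_def z_neq0.
have phi_le : phi k mu s <= z * (mu - s ^+ 2 * k).
  rewrite /phi; case: (leP 0 (mu - s ^+ 2 * k)) => c; [exact: mulr_ge0 | nra].
rewrite /persp_val (negbTE z_neq0) gk.
set w := x / z; have -> : x = w * z by rewrite divfK.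
have -> : (w * z) ^+ 2 / z = w ^+ 2 * z by rewrite exprMn [z ^+ 2]expr2 mulrA mulfK.
have : 0 <= z * k * (2 * w - s) ^+ 2 by rewrite mulr_ge0 ?sqr_ge0 // mulr_ge0 // ltW.
nra.
Qed.

(* Equality case of [fenchel_young] for s >= 0: if the slope condition holds
   at s with slope x/gamma, then z = 2x/s (or z = 0 when x = 0) is tight. *)
Lemma fenchel_young_tight_nonneg gamma mu b s x : 0 < gamma -> 0 <= mu -> 0 <= s ->
  slope_cond (4 * gamma)^-1 mu b s (x / gamma) ->
  exists z, 0 <= z <= 1 /\ (z = 0 -> x = 0) /\
    persp_val x z / gamma + mu * z = s * x / gamma + phi (4 * gamma)^-1 mu s.
Proof.
set k := (4 * gamma)^-1 => gamma_gt0 mu_ge0 s_ge0 H.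
have k_gt0 : 0 < k by rewrite invr_gt0 mulr_gt0.
have gk : gamma^-1 = 4 * k by rewrite /k invfM mulrA divff ?mul1r ?pnatr_eq0.
have ak : x / gamma = 2 * k * (2 * x) by rewrite gk; ring.
have /andP[x_ge0 x_le] := slope_cond_bounds (ltW k_gt0) s_ge0 H.
rewrite ak pmulr_rge0 ?ler_pM2l ?mulr_gt0 // in x_ge0 x_le.
have [x0|x_neq0] := eqVneq x 0.
  exists 0; split; first by rewrite lexx ler01.
  split=> //; rewrite /persp_val eqxx x0 /phi min_l; first lra.
  rewrite subr_ge0 leNgt; apply/negP => s_ext.
  have := slope_cond_exterior k_gt0 s_ext H.
  rewrite ak x0 !mulr0 pmulr_rle0 ?mulr_gt0 // => s_le0.
  by move: s_ext; rewrite (@le_anti _ _ s 0) ?s_le0 // expr0n mul0r; lra.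
have x_gt0 : 0 < x by rewrite lt_def x_neq0 /=; lra.
have s_gt0 : 0 < s by lra.
exists (2 * x / s); split; first by rewrite divr_ge0 //= ler_pdivrMr // mul1r.
have z_neq0 : 2 * x / s != 0 by rewrite !mulf_neq0 ?invr_eq0 ?gt_eqF.
split; first by move=> z0; move: z_neq0; rewrite z0 eqxx.
rewrite /persp_val (negbTE z_neq0) !gk.
case: (ltgtP (s ^+ 2 * k) mu) => [s_int|s_ext|s_bd].
- by have := slope_cond_interior k_gt0 s_int H; rewrite ak; nra.
- have x_eq : 2 * x = s.
    have := slope_cond_exterior k_gt0 s_ext H.
    by rewrite ak ler_pM2l ?mulr_gt0 //; lra.
  rewrite /phi min_r ?subr_le0 ?ltW // -x_eq; field.
  by rewrite (gt_eqF x_gt0).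
- rewrite /phi min_l ?s_bd ?subrr // -s_bd; field.
  by rewrite (gt_eqF x_gt0) (gt_eqF s_gt0).
Qed.

(* Equality case of [fenchel_young] for arbitrary s, by the symmetry
   (s, x) -> (-s, -x) of the slope condition and of both sides. *)
Lemma fenchel_young_tight gamma mu b s x : 0 < gamma -> 0 <= mu ->
  slope_cond (4 * gamma)^-1 mu b s (x / gamma) ->
  exists z, 0 <= z <= 1 /\ (z = 0 -> x = 0) /\
    persp_val x z / gamma + mu * z = s * x / gamma + phi (4 * gamma)^-1 mu s.
Proof.
move=> gamma_gt0 mu_ge0 H; have [s_ge0|s_lt0] := leP 0 s.
  exact: fenchel_young_tight_nonneg.
have Nsx : slope_cond (4 * gamma)^-1 mu b (- s) (- x / gamma).
  by rewrite mulNr; exact: slope_cond_opp.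
have [|z [z01 [zx eq]]] :=
  @fenchel_young_tight_nonneg gamma mu b (- s) (- x) gamma_gt0 mu_ge0 _ Nsx.
  by rewrite oppr_ge0 ltW.
exists z; split=> //; split; first by move=> /zx /eqP; rewrite oppr_eq0 => /eqP.
by move: eq; rewrite /persp_val sqrrN mulrNN phi_even.
Qed.
End Scalar.

Section Dot.
Context {R : comNzRingType}.

Definition dot {k} (u v : 'cV[R]_k) : R := (u^T *m v) 0 0.

Lemma dotE {k} (u v : 'cV[R]_k) : dot u v = \sum_(i < k) u i 0 * v i 0.
Proof. by rewrite /dot mxE; apply: eq_bigr => i _; rewrite mxE. Qed.

Lemma dotC {k} (u v : 'cV[R]_k) : dot u v = dot v u.
Proof. by rewrite !dotE; apply: eq_bigr => i _; rewrite mulrC. Qed.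

Lemma dotBl {k} (u u' v : 'cV[R]_k) : dot (u - u') v = dot u v - dot u' v.
Proof. by rewrite !dotE -sumrB; apply: eq_bigr => i _; rewrite !mxE mulrBl. Qed.

Lemma dotBr {k} (u v v' : 'cV[R]_k) : dot u (v - v') = dot u v - dot u v'.
Proof. by rewrite !dotE -sumrB; apply: eq_bigr => i _; rewrite !mxE mulrBr. Qed.

Lemma dotZl {k} a (u v : 'cV[R]_k) : dot (a *: u) v = a * dot u v.
Proof. by rewrite !dotE mulr_sumr; apply: eq_bigr => i _; rewrite !mxE mulrA. Qed.

Lemma dotZr {k} a (u v : 'cV[R]_k) : dot u (a *: v) = a * dot u v.
Proof. by rewrite dotC dotZl dotC. Qed.

Lemma dot_mull {k l} (B : 'M[R]_(l, k)) (u : 'cV[R]_k) (v : 'cV[R]_l) :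
  dot (B *m u) v = dot u (B^T *m v).
Proof. by rewrite /dot trmx_mul mulmxA. Qed.

Lemma dot_delta {k} (i : 'I_k) (v : 'cV[R]_k) : dot (delta_mx i 0) v = v i 0.
Proof. by rewrite /dot trmx_delta -rowE mxE. Qed.

Lemma gram_sym {m n} (A : 'M[R]_(m, n)) : (A^T *m A)^T = A^T *m A.
Proof. by rewrite trmx_mul trmxK. Qed.

Lemma quad_sub {k} (N : 'M[R]_k) (u v : 'cV[R]_k) : N^T = N ->
  dot (u - v) (N *m (u - v)) =
  dot u (N *m u) - 2 * dot v (N *m u) + dot v (N *m v).
Proof.
move=> N_sym; rewrite mulmxBr !dotBl !dotBr.
have -> : dot u (N *m v) = dot v (N *m u) by rewrite dotC dot_mull N_sym.
ring.
Qed.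

End Dot.

Section Quadratic.
Context {R : realType}.

Lemma sqnorm_dot {k} (v : 'cV[R]_k) : sqnorm v = dot v v.
Proof. by rewrite dotE; apply: eq_bigr => i _; rewrite expr2. Qed.

Lemma sqnorm_ge0 {k} (v : 'cV[R]_k) : 0 <= sqnorm v.
Proof. by rewrite sumr_ge0 // => i _; exact: sqr_ge0. Qed.

Lemma sqnorm_mul {m n} (A : 'M[R]_(m, n)) (v : 'cV[R]_n) :
  sqnorm (A *m v) = dot v ((A^T *m A) *m v).
Proof. by rewrite sqnorm_dot dot_mull mulmxA. Qed.


(* Completing the square: the core identity behind both weak and strong
   duality, with w playing the role of A'y - p/(2 gamma). *)
Lemma complete_square {m n} (A : 'M[R]_(m, n)) (y : 'cV[R]_m) (x w : 'cV[R]_n) :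
  A^T *m A \in unitmx ->
  let N := invmx (A^T *m A) in
  sqnorm (y - A *m x) - sqnorm y + 2 * dot x (A^T *m y - w) + dot w (N *m w)
  = sqnorm (A *m (x - N *m w)).
Proof.
move=> AA_unit N.
have N_sym : N^T = N by rewrite /N trmx_inv gram_sym.
have MN : (A^T *m A) *m N = 1 by rewrite mulmxV.
rewrite sqnorm_mul quad_sub ?gram_sym // mulmxA MN mul1mx.
have -> : dot (N *m w) ((A^T *m A) *m x) = dot x w.
  by rewrite dot_mull N_sym mulmxA mulVmx // mul1mx dotC.
have -> : dot (N *m w) w = dot w (N *m w) by rewrite dotC.
rewrite !sqnorm_dot dotBl !dotBr (dotC y) !dot_mull mulmxA.
lra.
Qed.

End Quadratic.

Section EntrywiseContinuity.
Context {T : topologicalType} {R : realType}.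

Definition entry_continuous {p q} (F : T -> 'M[R]_(p, q)) : Prop :=
  forall i j, continuous (fun t => F t i j).

Lemma entry_continuous_mul {p q r} {F : T -> 'M[R]_(p, q)} {G : T -> 'M[R]_(q, r)} :
  entry_continuous F -> entry_continuous G -> entry_continuous (fun t => F t *m G t).
Proof.
move=> Fc Gc i j; under eq_fun do rewrite mxE.
apply: (@continuous_big _ _ +%R 0 xpredT add_continuous) => l _.
by move=> t; apply: continuousM; [exact: Fc | exact: Gc].
Qed.

Lemma entry_continuous_tr {p q} {F : T -> 'M[R]_(p, q)} :
  entry_continuous F -> entry_continuous (fun t => (F t)^T).
Proof. by move=> Fc i j; under eq_fun do rewrite mxE; exact: Fc. Qed.

Lemma entry_continuous_cst {p q} (B : 'M[R]_(p, q)) : entry_continuous (fun=> B).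
Proof. by move=> i j; exact: cst_continuous. Qed.

Lemma entry_continuous_sub {p q} {F G : T -> 'M[R]_(p, q)} :
  entry_continuous F -> entry_continuous G -> entry_continuous (fun t => F t - G t).
Proof.
move=> Fc Gc i j; under eq_fun do rewrite !mxE.
by move=> t; apply: cvgB; [exact: Fc | exact: Gc].
Qed.

Lemma entry_continuous_scale {p q} (a : R) {F : T -> 'M[R]_(p, q)} :
  entry_continuous F -> entry_continuous (fun t => a *: F t).
Proof.
move=> Fc i j; under eq_fun do rewrite mxE.
by move=> t; apply: cvgM; [exact: cvg_cst | exact: Fc].
Qed.

End EntrywiseContinuity.

Lemma continuous_max_on_box {R : realType} {n} {F : 'rV[R]_n -> R} {K : R} :
  0 <= K -> continuous F ->
  exists2 c : 'rV[R]_n, (forall i, `|c 0 i| <= K) &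
    forall v : 'rV[R]_n, (forall i, `|v 0 i| <= K) -> F v <= F c.
Proof.
move=> K_ge0 F_cont.
pose B := [set v : 'rV[R]_n | forall i, `[- K, K]%classic (v 0 i)].
have B_compact : compact B.
  by apply: (@rV_compact _ _ (fun=> `[- K, K]%classic)) => _; exact: segment_compact.
have B_nonempty : B !=set0.
  by exists 0 => i /=; rewrite mxE in_itv /= oppr_le0 K_ge0.
have [c cB c_max] := compact_EVT_max B_nonempty B_compact (continuous_subspaceT F_cont).
exists c => [i|v vB].
  by move: cB; rewrite inE => /(_ i); rewrite /= in_itv /= ler_norml.
by apply: c_max; rewrite inE => i /=; rewrite in_itv /= -ler_norml.
Qed.

Lemma persp_finite {R : realType} {x z : R} : (z = 0 -> x = 0) ->
  persp x z = (persp_val x z)%:E.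
Proof. by rewrite /persp /persp_val; case: eqP => // z0 /(_ z0) ->; rewrite eqxx. Qed.

Lemma persp_infinite {R : realType} (x z : R) : z = 0 -> x != 0 -> persp x z = +oo%E.
Proof. by move=> z0 /negbTE x_neq0; rewrite /persp z0 eqxx x_neq0. Qed.

Lemma persp_ge0 {R : realType} (x z : R) : 0 <= z -> (0 <= persp x z)%E.
Proof.
move=> z_ge0; rewrite /persp; case: eqP => _; first by case: eqP.
by rewrite lee_fin divr_ge0 ?sqr_ge0.
Qed.

Section Duality.
Context {R : realType} {m n : nat} (A : 'M[R]_(m, n)) (y : 'cV[R]_m) (gamma mu : R).
Hypotheses (AA_unit : A^T *m A \in unitmx) (gamma_gt0 : 0 < gamma) (mu_ge0 : 0 <= mu).

Local Notation N := (invmx (A^T *m A)).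
Local Notation k := ((4 * gamma)^-1).
Local Notation dual := (CR_dual A y gamma mu).
Local Notation obj := (CR_obj A y gamma mu).

Definition dual_center (p : 'cV[R]_n) : 'cV[R]_n := A^T *m y - (2 * gamma)^-1 *: p.

Lemma gram_inv_sym : N^T = N.
Proof. by rewrite trmx_inv gram_sym. Qed.

Lemma dualE p :
  dual p = sqnorm y - dot (dual_center p) (N *m dual_center p)
           + \sum_(i < n) phi k mu (p i 0).
Proof. by rewrite /CR_dual /dot mulmxA. Qed.

(* N = (A'A)^-1 is positive semidefinite: v'Nv = |A N v|^2. *)
Lemma gram_inv_psd v : 0 <= dot v (N *m v).
Proof.
rewrite -{1}[v]mul1mx -(mulmxV AA_unit) -mulmxA dot_mull gram_sym -sqnorm_mul.
exact: sqnorm_ge0.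
Qed.

(* Coercivity: the dual tends to -oo as any coordinate of p grows. *)
Lemma dual_coercive p i : dual p <= sqnorm y + mu - p i 0 ^+ 2 * k.
Proof.
have quad_ge0 := gram_inv_psd (dual_center p).
have rest_le0 : \sum_(j < n | j != i) phi k mu (p j 0) <= 0.
  by apply: sumr_le0 => j _; rewrite ge_min lexx.
have phi_le : phi k mu (p i 0) <= mu - p i 0 ^+ 2 * k by rewrite ge_min lexx orbT.
rewrite dualE (bigD1 i) //=; lra.
Qed.

(* The dual, read as a function of row vectors (for compactness), is
   continuous. *)
Lemma dual_continuous : continuous (fun r : 'rV[R]_n => dual r^T).
Proof.
pose u (r : 'rV[R]_n) := dual_center r^T.
have u_cont : entry_continuous u.
  apply: entry_continuous_sub; first exact: entry_continuous_cst.
  apply: entry_continuous_scale; apply: entry_continuous_tr => i j.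
  exact: coord_continuous.
have quad_cont : continuous (fun r => ((u r)^T *m (N *m u r)) 0 0).
  have N_u_cont : entry_continuous (fun r => N *m u r).
    exact: entry_continuous_mul (entry_continuous_cst N) u_cont.
  exact: entry_continuous_mul (entry_continuous_tr u_cont) N_u_cont 0 0.
have phi_cont : continuous (fun r : 'rV[R]_n => \sum_(i < n) phi k mu (r 0 i)).
  apply: (@continuous_big _ _ +%R 0 xpredT add_continuous) => i _.
  move=> r; apply: (continuous_min (f := fun=> 0 : R)
                                    (g := fun r : 'rV[R]_n => mu - r 0 i ^+ 2 * k)).
    exact: cst_continuous.
  apply: continuousB; first exact: cst_continuous.
  apply: continuousM; last exact: cst_continuous.
  by apply: continuousM; exact: coord_continuous.
have -> : (fun r : 'rV[R]_n => dual r^T) =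
    (fun r => sqnorm y - ((u r)^T *m (N *m u r)) 0 0
              + \sum_(i < n) phi k mu (r 0 i)).
  apply/funext => r; rewrite dualE; congr (_ - _ + _).
  by apply: eq_bigr => i _; rewrite mxE.
move=> r; apply: (continuousD (f := fun r => sqnorm y - ((u r)^T *m (N *m u r)) 0 0)).
  by apply: continuousB; [exact: cst_continuous | exact: quad_cont].
exact: phi_cont.
Qed.

(* The dual attains its maximum: outside a large box it is below D(0), and
   on the box a maximum exists. *)
Lemma dual_has_max : exists p, forall q, dual q <= dual p.
Proof.
pose S := sqnorm y + mu - dual 0.
have k_gt0 : 0 < k by rewrite invr_gt0 mulr_gt0.
pose K := 1 + `|S| / k.
have K_ge1 : 1 <= K by rewrite lerDl divr_ge0 ?normr_ge0 ?ltW.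
have K_ge0 : 0 <= K := le_trans ler01 K_ge1.
have outside (q : 'cV[R]_n) (i : 'I_n) : K < `|q i 0| -> dual q < dual 0.
  move=> q_out; apply: le_lt_trans (dual_coercive q i) _.
  have q2 : `|q i 0| ^+ 2 = q i 0 ^+ 2 := real_normK (num_real _).
  have : K < q i 0 ^+ 2 by rewrite -q2; nra.
  rewrite -(ltr_pM2r k_gt0) mulrDl mul1r divfK ?gt_eqF //.
  have := ler_norm S; rewrite /S; lra.
have [c c_box c_max] := continuous_max_on_box K_ge0 dual_continuous.
exists c^T => q.
case: (boolP [forall i, `|q i 0| <= K]) => [/forallP q_box|/forallPn[i]].
  by have := c_max q^T; rewrite trmxK; apply => j; rewrite mxE.
rewrite -ltNge => /outside /ltW /le_trans; apply.
by have := c_max 0; rewrite trmx0; apply => j; rewrite mxE normr0.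
Qed.

Lemma dual_perturb p i t :
  dual (p + t *: delta_mx i 0) - dual p =
  t * ((N *m dual_center p) i 0 / gamma) - t ^+ 2 * ((2 * gamma)^-1 ^+ 2 * N i i)
  + phi k mu (p i 0 + t) - phi k mu (p i 0).
Proof.
set c := (2 * gamma)^-1; set e : 'cV[R]_n := delta_mx i 0.
have center_shift : dual_center (p + t *: e) = dual_center p - (c * t) *: e.
  by rewrite /dual_center scalerDr scalerA opprD addrA.
have Nee : dot e (N *m e) = N i i by rewrite dot_delta -colE mxE.
have phi_shift : \sum_(j < n) phi k mu ((p + t *: e) j 0) =
    \sum_(j < n) phi k mu (p j 0) + (phi k mu (p i 0 + t) - phi k mu (p i 0)).
  rewrite (bigD1 i) //= [in RHS](bigD1 i) //= !mxE eqxx mulr1.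
  have -> : \sum_(j < n | j != i) phi k mu ((p + t *: e) j 0) =
      \sum_(j < n | j != i) phi k mu (p j 0).
    by apply: eq_bigr => j ji; rewrite !mxE (negbTE ji) mulr0 addr0.
  lra.
have two_c : gamma^-1 = 2 * c by rewrite /c invfM mulrA divff ?mul1r ?pnatr_eq0.
rewrite !dualE center_shift quad_sub ?gram_inv_sym // -scalemxAr.
rewrite !dotZl dotZr Nee dot_delta phi_shift two_c.
lra.
Qed.

Lemma obj_infinite {x z : 'cV[R]_n} {i : 'I_n} :
  CR_feasible z -> z i 0 = 0 -> x i 0 != 0 -> obj x z = +oo%E.
Proof.
move=> z_feas zi0 xi_neq0.
have persp_sum : (\sum_(j < n) persp (x j ord0) (z j ord0) = +oo)%E.
  rewrite (bigD1 i) //= persp_infinite // addye //.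
  suff : (0 <= \sum_(j < n | j != i) persp (x j ord0) (z j ord0))%E.
    by case: (\sum_(j < n | _) _)%E.
  by apply: sume_ge0 => j _; apply: persp_ge0; have /andP[] := z_feas j.
by rewrite /CR_obj persp_sum gt0_muley ?lte_fin ?invr_gt0 // addey // addye.
Qed.

Lemma obj_decomposition (q : 'cV[R]_n) {x z : 'cV[R]_n} :
  (forall i, z i 0 = 0 -> x i 0 = 0) ->
  obj x z = (sqnorm (A *m (x - N *m dual_center q)) + dual q
    + \sum_(i < n) (persp_val (x i 0) (z i 0) / gamma + mu * z i 0
                    - (q i 0 * x i 0 / gamma + phi k mu (q i 0))))%:E.
Proof.
move=> xz; rewrite /CR_obj (eq_bigr _ (fun i _ => persp_finite (xz i))).
rewrite sumEFin -EFinM -!EFinD; congr (_%:E).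
rewrite -(complete_square A y x (dual_center q) AA_unit) dualE.
have -> : A^T *m y - dual_center q = (2 * gamma)^-1 *: q.
  by rewrite /dual_center opprB addrC subrK.
have -> : \sum_(i < n) (persp_val (x i 0) (z i 0) / gamma + mu * z i 0
            - (q i 0 * x i 0 / gamma + phi k mu (q i 0))) =
    gamma^-1 * (\sum_(i < n) persp_val (x i 0) (z i 0)) + mu * \sum_(i < n) z i 0
    - (gamma^-1 * dot x q + \sum_(i < n) phi k mu (q i 0)).
  rewrite sumrB !big_split /= !mulr_sumr dotE mulr_sumr.
  by congr (_ + _ - (_ + _)); apply: eq_bigr => i _; ring.
have two_c : gamma^-1 = 2 * (2 * gamma)^-1 by rewrite invfM mulrA divff ?mul1r ?pnatr_eq0.
rewrite dotZr two_c; lra.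
Qed.

Lemma weak_duality (q x z : 'cV[R]_n) : CR_feasible z -> ((dual q)%:E <= obj x z)%E.
Proof.
move=> z_feas.
have [[i [zi0 xi_neq0]]|finite] := pselect (exists i, z i 0 = 0 /\ x i 0 != 0).
  by rewrite (obj_infinite z_feas zi0 xi_neq0) leey.
have xz i : z i 0 = 0 -> x i 0 = 0.
  by move=> zi0; have [|xi_neq0] := eqVneq (x i 0) 0; last by case: finite; exists i.
rewrite (obj_decomposition q xz) lee_fin.
have gaps_ge0 : 0 <= \sum_(i < n) (persp_val (x i 0) (z i 0) / gamma + mu * z i 0
                    - (q i 0 * x i 0 / gamma + phi k mu (q i 0))).
  apply: sumr_ge0 => i _; rewrite subr_ge0.
  by apply: fenchel_young; [|exact: z_feas | exact: xz].
have := sqnorm_ge0 (A *m (x - N *m dual_center q)); lra.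
Qed.

(* At a maximizer p of the dual, x = N w(p) together with the tight z_i of
   [fenchel_young_tight] attains the value D(p). *)
Lemma strong_duality_at_max p : (forall q, dual q <= dual p) ->
  exists x z : 'cV[R]_n, CR_feasible z /\ obj x z = (dual p)%:E.
Proof.
move=> p_max; pose x := N *m dual_center p.
have tight i : exists zi, 0 <= zi <= 1 /\ (zi = 0 -> x i 0 = 0) /\
    persp_val (x i 0) zi / gamma + mu * zi = p i 0 * x i 0 / gamma + phi k mu (p i 0).
  apply: (@fenchel_young_tight _ gamma mu ((2 * gamma)^-1 ^+ 2 * N i i)) => // t.
  by have := p_max (p + t *: delta_mx i 0); rewrite -subr_le0 dual_perturb.
have [zf zfP] := fin_all_exists tight.
pose z : 'cV[R]_n := \col_i zf i.
have zE i : z i 0 = zf i by rewrite mxE.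
exists x, z; split=> [i|]; first by rewrite zE; case: (zfP i).
rewrite (obj_decomposition p (z := z)) => [|i]; last by rewrite zE; case: (zfP i) => _ [].
rewrite subrr mulmx0 big1 => [|i _]; last first.
  by rewrite zE; case: (zfP i) => _ [_ ->]; rewrite subrr.
by rewrite /sqnorm big1 ?add0r ?addr0 // => i _; rewrite mxE expr0n.
Qed.
End Duality.

Theorem mainTheorem3 (R : realType) (m n : nat) (A : 'M[R]_(m, n)) (y : 'cV[R]_m)
    (gamma mu : R) :
  A^T *m A \in unitmx -> 0 < gamma -> 0 <= mu ->
  exists p : 'cV[R]_n,
    zeta_CR A y gamma mu = (CR_dual A y gamma mu p)%:E /\
    (forall q : 'cV[R]_n, CR_dual A y gamma mu q <= CR_dual A y gamma mu p).
Proof.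
move=> AA_unit gamma_gt0 mu_ge0.
have [p p_max] := dual_has_max A y gamma mu AA_unit gamma_gt0.
exists p; split=> //; apply/eqP; rewrite eq_le; apply/andP; split.
  have [x [z [z_feas obj_eq]]] :=
    strong_duality_at_max A y gamma mu AA_unit gamma_gt0 mu_ge0 p p_max.
  apply: ge_ereal_inf; exists (CR_obj A y gamma mu x z); first by exists x, z.
  by rewrite obj_eq.
apply: le_ereal_inf_tmp => _ [x [z [z_feas ->]]].
exact: weak_duality.
Qed.
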